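(* (1) For $\lambda\in[0,1)$, $\mathbb{L}^{>\lambda}(\mathrm{QBA}|\mathrm{D})$ is not closed under intersection. (2) For $\lambda\in[0,1)$, $\mathbb{L}^{>\lambda}(\mathrm{QBA}|\mathrm{D})$ is not closed under complementation (relative to $\Sigma^\omega$).
   Context: A quantum automaton is a tuple $\mathcal{A}=(\mathcal{H},|s_0\rangle,\Sigma,\{U_\sigma:\sigma\in\Sigma\},F)$ where $\mathcal{H}$ is a finite-dimensional complex Hilbert space, $|s_0\rangle$ a unit vector, $\Sigma$ a finite alphabet, each $U_\sigma$ unitary, and $F$ a subspace. For $w=\sigma_1\sigma_2\cdots\in\Sigma^\omega$, a unit vector $|\psi\rangle\in F$ and checkpoints $0\le n_1<n_2<\cdots$, the disturbing run is $|s_0\rangle$ and for $n\ge1$: $|s_n\rangle=U_{\sigma_n}|\psi\rangle$ if $n-1=n_i$ for some $i$, else $|s_n\rangle=U_{\sigma_n}|s_{n-1}\rangle$; $f^{\mathrm{D}}_{\mathcal{A}}(w)=\sup_{|\psi\rangle}\sup_{\{n_i\}}\inf_{i\ge1}|\langle\psi|s_{n_i}\rangle|^2$ over unit $|\psi\rangle\in F$ and strictly increasing checkpoint sequences. $\mathcal{L}^{>\lambda}(\mathcal{A}|\mathrm{D})=\{w:f^{\mathrm{D}}_{\mathcal{A}}(w)>\lambda\}$ and $\mathbb{L}^{>\lambda}(\mathrm{QBA}|\mathrm{D})$ is the class of all such languages over all quantum automata. *)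

From HB Require Import structures.
From mathcomp Require Import all_boot all_order all_algebra.
From mathcomp Require Import boolp classical_sets reals.
From mathcomp.real_closed Require Import complex.

Set Implicit Arguments.
Unset Strict Implicit.
Unset Printing Implicit Defensive.

Import Order.TTheory GRing.Theory Num.Theory.
Local Open Scope ring_scope.
Local Open Scope classical_set_scope.

Section QA.
Variable R : realType.

Definition adj m n (M : 'M[R[i]]_(m, n)) : 'M[R[i]]_(n, m) :=
  (map_mx (fun x : R[i] => x^*) M)^T.

Definition inner n (psi s : 'cV[R[i]]_n) : R[i] := (adj psi *m s) 0 0.

Definition sqmod (z : R[i]) : R := complex.Re z ^+ 2 + complex.Im z ^+ 2.

Definition unit_vec n (v : 'cV[R[i]]_n) : Prop := \sum_(k < n) sqmod (v k 0) = 1.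

Definition unitary n (U : 'M[R[i]]_n) : Prop := U *m adj U = 1%:M /\ adj U *m U = 1%:M.

(* A quantum automaton over the alphabet Sigma: Hilbert space C^qa_dim,
   initial unit vector qa_s0, unitaries qa_U sigma, and the subspace F given as
   the row space of the matrix qa_F; a column vector v lies in F iff (v^T <= qa_F)%MS. *)
Record qautomaton (Sigma : finType) := QAutomaton {
  qa_dim : nat;
  qa_s0 : 'cV[R[i]]_qa_dim;
  qa_U : Sigma -> 'M[R[i]]_qa_dim;
  qa_F : 'M[R[i]]_qa_dim;
  qa_s0_unit : unit_vec qa_s0;
  qa_U_unitary : forall a, unitary (qa_U a)
}.

Definition in_F Sigma (A : qautomaton Sigma) (v : 'cV[R[i]]_(qa_dim A)) : Prop :=
  (v^T <= qa_F A)%MS.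

(* infinite words sigma_1 sigma_2 ... ; sigma_n is (w n.-1) *)
Definition oword (Sigma : finType) := nat -> Sigma.

(* checkpoints n_1 < n_2 < ... ; n_i is (c i.-1) *)
Definition checkpoints (c : nat -> nat) : Prop := forall i, (c i < c i.+1)%N.

Fixpoint drun Sigma (A : qautomaton Sigma) (w : oword Sigma)
    (psi : 'cV[R[i]]_(qa_dim A)) (c : nat -> nat) (n : nat) : 'cV[R[i]]_(qa_dim A) :=
  match n with
  | 0 => qa_s0 A
  | m.+1 => qa_U A (w m) *m
              (if pselect (exists i, c i = m) then psi else @drun Sigma A w psi c m)
  end.

Definition fD Sigma (A : qautomaton Sigma) (w : oword Sigma) : R :=
  sup [set x : R | exists (psi : 'cV[R[i]]_(qa_dim A)) (c : nat -> nat),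
         [/\ in_F psi, unit_vec psi, checkpoints c &
             x = inf [set y : R | exists i : nat, y = sqmod (inner psi (@drun Sigma A w psi c (c i)))]]].

Definition langD Sigma (A : qautomaton Sigma) (lam : R) : set (oword Sigma) :=
  [set w | lam < fD A w].

Definition QBA_D (Sigma : finType) (lam : R) : set (set (oword Sigma)) :=
  [set L | exists A : qautomaton Sigma, L = langD A lam].

End QA.

Arguments QBA_D {R} Sigma lam _.
Arguments drun {R Sigma} A w psi c n.

(* If lam < f^D_A(w), keep a good disturbing run of A on w up to its first
   checkpoint and replace the rest of w by a^omega.  Since U_a is unitary on a
   finite-dimensional space, some power U_a^N (N > 0) brings psi back close to
   psi, so checkpoints every N steps keep every fidelity above lam: a language
   of L^{>lam}(QBA|D) containing w contains some w_{<m} a^omega.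
   The two-state automaton [flipper j] (U_true swaps the basis vectors, U_false
   is the identity, F = span e_j) accepts every word ending in true^omega and
   rejects every word ending in false^omega whose undisturbed state is not e_j.
   So the intersection of [flipper 0] and [flipper 1] contains true^omega but
   no word ending in false^omega, and the complement of [flipper 0] contains
   true false^omega but no word ending in true^omega. *)

From HB Require Import structures.
From mathcomp Require Import all_boot all_order all_algebra fingroup perm.
From mathcomp Require Import boolp classical_sets reals.
From mathcomp.real_closed Require Import complex.
From mathcomp Require Import ring lra zify.
Import Order.TTheory GRing.Theory Num.Theory.
Local Open Scope complex_scope.
Local Open Scope ring_scope.
Local Open Scope classical_set_scope.
Set Implicit Arguments.
Unset Strict Implicit.
Unset Printing Implicit Defensive.

Section Hilbert.
Variable R : realType.
Local Notation C := R[i].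

Definition sqnorm n (v : 'cV[C]_n) : R := \sum_(k < n) sqmod (v k 0).

Lemma sqmodE (z : C) : (sqmod z)%:C = z^* * z.
Proof.
case: z => a b; rewrite /sqmod /=.
by apply/eqP; rewrite eq_complex /=; apply/andP; split; apply/eqP; ring.
Qed.

Lemma sqmod_ge0 (z : C) : 0 <= sqmod z.
Proof. by rewrite /sqmod addr_ge0 ?sqr_ge0. Qed.

Lemma sqmodM (x y : C) : sqmod (x * y) = sqmod x * sqmod y.
Proof. by case: x => a b; case: y => c d; rewrite /sqmod /=; ring. Qed.

Lemma sqmod_conj (x : C) : sqmod x^* = sqmod x.
Proof. by case: x => a b; rewrite /sqmod /=; ring. Qed.

Lemma sqmod0 : sqmod (0 : C) = 0.
Proof. by rewrite /sqmod /=; ring. Qed.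

Lemma sqmod1 : sqmod (1 : C) = 1.
Proof. by rewrite /sqmod /=; ring. Qed.

Lemma sqnorm_ge0 n (v : 'cV[C]_n) : 0 <= sqnorm v.
Proof. by apply: sumr_ge0 => k _; apply: sqmod_ge0. Qed.

Lemma sqmod_le_sqnorm n (v : 'cV[C]_n) k : sqmod (v k 0) <= sqnorm v.
Proof.
by rewrite /sqnorm (bigD1 k) //= lerDl; apply: sumr_ge0 => l _; apply: sqmod_ge0.
Qed.

Lemma innerE n (p v : 'cV[C]_n) : inner p v = \sum_(k < n) (p k 0)^* * v k 0.
Proof. by rewrite /inner /adj !mxE; apply: eq_bigr => k _; rewrite !mxE. Qed.

Lemma inner_sqnorm n (v : 'cV[C]_n) : inner v v = (sqnorm v)%:C.
Proof.
by rewrite innerE /sqnorm rmorph_sum; apply: eq_bigr => k _; rewrite -sqmodE.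
Qed.

Lemma inner_conj n (p v : 'cV[C]_n) : inner v p = (inner p v)^*.
Proof.
rewrite !innerE rmorph_sum; apply: eq_bigr => k _.
by rewrite rmorphM /= conjCK mulrC.
Qed.

Lemma innerBr n (p v v' : 'cV[C]_n) : inner p (v - v') = inner p v - inner p v'.
Proof. by rewrite /inner mulmxBr !mxE. Qed.

Lemma innerZr n (p v : 'cV[C]_n) a : inner p (a *: v) = a * inner p v.
Proof. by rewrite /inner -scalemxAr !mxE. Qed.

Lemma innerBl n (p p' v : 'cV[C]_n) : inner (p - p') v = inner p v - inner p' v.
Proof. by rewrite (inner_conj v) innerBr rmorphB /= -!inner_conj. Qed.

Lemma innerZl n (p v : 'cV[C]_n) a : inner (a *: p) v = a^* * inner p v.
Proof. by rewrite (inner_conj v) innerZr rmorphM /= -!inner_conj. Qed.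

Lemma adjM m n p (A : 'M[C]_(m, n)) (B : 'M[C]_(n, p)) :
  adj (A *m B) = adj B *m adj A.
Proof. by rewrite /adj map_mxM trmx_mul. Qed.

Lemma inner_unitary n (U : 'M[C]_n) p v :
  unitary U -> inner (U *m p) (U *m v) = inner p v.
Proof. by case=> _ UU; rewrite /inner adjM mulmxA -(mulmxA (adj p)) UU mulmx1. Qed.

Lemma sqnorm_unitary n (U : 'M[C]_n) v : unitary U -> sqnorm (U *m v) = sqnorm v.
Proof. by move=> hU; apply: complexI; rewrite -!inner_sqnorm inner_unitary. Qed.

Lemma sqnorm_iter_unitary n (U : 'M[C]_n) v k :
  unitary U -> sqnorm (iter k (mulmx U) v) = sqnorm v.
Proof. by move=> hU; elim: k => //= k IH; rewrite sqnorm_unitary. Qed.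

Lemma sub1_sqmodE (z : C) : (1 - sqmod z)%:C = 1 - z^* * z.
Proof.
case: z => a b; rewrite /sqmod /=.
by apply/eqP; rewrite eq_complex /=; apply/andP; split; apply/eqP; ring.
Qed.

(* Expand [0 <= |v - <p|v> p|^2]. *)
Lemma sqmod_inner_le1 n (p v : 'cV[C]_n) :
  sqnorm p = 1 -> sqnorm v = 1 -> sqmod (inner p v) <= 1.
Proof.
move=> hp hv; set z := inner p v.
have expand : inner (v - z *: p) (v - z *: p) = 1 - z^* * z.
  rewrite innerBl !innerBr !innerZl !innerZr !inner_sqnorm hp hv inner_conj -/z.
  by rewrite [1%:C]/(1 : C); ring.
have sqnormE : (sqnorm (v - z *: p))%:C = (1 - sqmod z)%:C.
  by rewrite -inner_sqnorm expand sub1_sqmodE.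
by have := sqnorm_ge0 (v - z *: p); rewrite (complexI sqnormE) subr_ge0.
Qed.

Lemma sqnorm_sub_unit n (p v : 'cV[C]_n) : sqnorm p = 1 -> sqnorm v = 1 ->
  sqnorm (v - p) = 2 - 2 * complex.Re (inner p v).
Proof.
move=> hp hv; apply: complexI; rewrite -inner_sqnorm.
rewrite innerBl !innerBr !inner_sqnorm hp hv inner_conj [1%:C]/(1 : C).
by case: (inner p v) => a b; apply/eqP; rewrite eq_complex /=; apply/andP; split;
   apply/eqP; ring.
Qed.

(* |<p|v>|^2 >= (Re <p|v>)^2 > ((1 + lam) / 2)^2 >= lam. *)
Lemma sqmod_inner_gt n (p v : 'cV[C]_n) (lam : R) :
  sqnorm p = 1 -> sqnorm v = 1 -> sqnorm (v - p) < 1 - lam ->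
  lam < sqmod (inner p v).
Proof.
move=> hp hv; rewrite sqnorm_sub_unit // /sqmod.
case: (inner p v) => a b /= close.
have [lam_le|lam_gt] := lerP lam (-1); first nra.
have a_gt : 1 + lam < 2 * a by lra.
have : 4 * lam <= (1 + lam) ^+ 2 by have := sqr_ge0 (1 - lam); lra.
nra.
Qed.

End Hilbert.

Section Recurrence.
Variable R : realType.
Local Notation C := R[i].

Lemma pigeonhole_nat (T : finType) (f : nat -> T) :
  exists k k', (k < k')%N /\ f k = f k'.
Proof.
pose g (k : 'I_#|T|.+1) := f k.
have /injectivePn [k1 [k2 k12 g12]] : ~~ injectiveb g.
  by apply/negP => /injectiveP /leq_card; rewrite card_ord ltnn.
case: (ltngtP k1 k2) => [lt12|gt12|eq12].
- by exists k1, k2.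
- by exists k2, k1.
- by move: k12; rewrite (val_inj eq12) eqxx.
Qed.

Definition grid_cell (K : nat) (x : R) : 'I_(K.*2).+1 :=
  inord (Num.truncn ((x + 1) * K%:R)).

Lemma grid_cellP (K : nat) (x y : R) : (0 < K)%N ->
  -1 <= x <= 1 -> -1 <= y <= 1 -> grid_cell K x = grid_cell K y ->
  (K%:R * (y - x)) ^+ 2 < 1.
Proof.
move=> K_gt0 /andP[x_ge x_le] /andP[y_ge y_le] /(congr1 val).
have K_ge1 : 1 <= K%:R :> R by rewrite ler1n.
have cell_lt (z : R) : -1 <= z <= 1 -> (Num.truncn ((z + 1) * K%:R) < (K.*2).+1)%N.
  by case/andP=> z_ge z_le; rewrite ltnS truncn_le_nat -natr1 -muln2 natrM; nra.
rewrite /= !inordK ?cell_lt ?x_ge ?x_le ?y_ge ?y_le // => same_cell.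
have x_ge0 : 0 <= (x + 1) * K%:R by nra.
have y_ge0 : 0 <= (y + 1) * K%:R by nra.
move: (truncn_itv x_ge0) (truncn_itv y_ge0); rewrite same_cell -natr1.
by set t := (Num.truncn _)%:R => /andP[? ?] /andP[? ?]; nra.
Qed.

(* Pigeonhole over a grid of mesh 1/K on the real and imaginary parts of
   all coordinates. *)
Lemma sqnorm_le1_seq_close n (f : nat -> 'cV[C]_n) (e : R) :
  (forall k, sqnorm (f k) <= 1) -> 0 < e ->
  exists k k', (k < k')%N /\ sqnorm (f k' - f k) < e.
Proof.
move=> f_le1 e_gt0.
pose K := (Num.truncn (2 * n%:R / e)).+1.
have K_ge1 : 1 <= K%:R :> R by rewrite ler1n.
have K_big : 2 * n%:R < K%:R * e by rewrite -ltr_pdivrMr // truncnS_gt.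
have coord_bnd k i : -1 <= complex.Re (f k i 0) <= 1 /\
                     -1 <= complex.Im (f k i 0) <= 1.
  have := le_trans (sqmod_le_sqnorm (f k) i) (f_le1 k); rewrite /sqmod => le1.
  by split; apply/andP; split; nra.
pose cells k : {ffun 'I_n * bool -> 'I_(K.*2).+1} := [ffun ib => grid_cell K
  (if ib.2 then complex.Re (f k ib.1 0) else complex.Im (f k ib.1 0))].
have [k [k' [lt_kk' same_cells]]] := pigeonhole_nat cells.
exists k, k'; split => //.
have coord_close i : K%:R ^+ 2 * sqmod ((f k' - f k) i 0) <= 2.
  have cell_eq b := congr1 (fun g : {ffun _ -> _} => g (i, b)) same_cells.
  move: (cell_eq true) (cell_eq false); rewrite !ffunE /=.
  have [Re_k Im_k] := coord_bnd k i; have [Re_k' Im_k'] := coord_bnd k' i.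
  move=> /(grid_cellP (ltn0Sn _) Re_k Re_k') Re_close.
  move=> /(grid_cellP (ltn0Sn _) Im_k Im_k') Im_close.
  move: Re_close Im_close; rewrite !mxE /sqmod.
  by case: (f k' i 0) => a b; case: (f k i 0) => c d /=; rewrite -/K; nra.
have sum_close : K%:R ^+ 2 * sqnorm (f k' - f k) <= 2 * n%:R.
  have -> : 2 * n%:R = \sum_(i < n) (2 : R) by rewrite sumr_const card_ord mulr_natr.
  rewrite /sqnorm mulr_sumr.
  by apply: ler_sum => i _; apply: coord_close.
have K_close : K%:R * (K%:R * sqnorm (f k' - f k)) < K%:R * e.
  by rewrite mulrA -expr2; lra.
rewrite ltr_pM2l in K_close; last lra.
by have := sqnorm_ge0 (f k' - f k); nra.
Qed.

Lemma iter_mulmxB n (U : 'M[C]_n) k (a b : 'cV[C]_n) :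
  iter k (mulmx U) a - iter k (mulmx U) b = iter k (mulmx U) (a - b).
Proof. by elim: k => //= k IH; rewrite -mulmxBr IH. Qed.

Lemma unitary_recurrence n (U : 'M[C]_n) psi (lam : R) :
  unitary U -> sqnorm psi = 1 -> lam < 1 ->
  exists N, (0 < N)%N /\ lam < sqmod (inner psi (iter N (mulmx U) psi)).
Proof.
move=> hU psi_unit lam_lt1.
have iter_unit k : sqnorm (iter k (mulmx U) psi) = 1 by rewrite sqnorm_iter_unitary.
have iter_le1 k : sqnorm (iter k (mulmx U) psi) <= 1 by rewrite iter_unit.
have lam_gap : 0 < 1 - lam by rewrite subr_gt0.
have [k [k' [lt_kk' close]]] := sqnorm_le1_seq_close iter_le1 lam_gap.
exists (k' - k)%N; split; first by rewrite subn_gt0.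
apply: sqmod_inner_gt => //.
have shift : iter k' (mulmx U) psi - iter k (mulmx U) psi =
    iter k (mulmx U) (iter (k' - k) (mulmx U) psi - psi).
  by rewrite -iter_mulmxB -iterD subnKC // ltnW.
by rewrite shift sqnorm_iter_unitary in close.
Qed.

End Recurrence.

Lemma checkpoints_mono c : checkpoints c -> {mono c : m n / (m < n)%N}.
Proof.
move=> hc; apply/leqW_mono/leq_mono.
by apply: (homo_ltn _ hc) => y x z; apply: ltn_trans.
Qed.

Lemma checkpoints_geq c : checkpoints c -> forall i, (i <= c i)%N.
Proof. by move=> hc; elim=> // i IH; apply: leq_ltn_trans IH (hc i). Qed.

Section DisturbingRun.
Variables (R : realType) (Sigma : finType) (A : qautomaton R Sigma).
Local Notation C := R[i].
Implicit Types (w : oword Sigma) (psi : 'cV[C]_(qa_dim A)) (c : nat -> nat).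

Definition fidelity w psi c n : R := sqmod (inner psi (drun A w psi c n)).

Lemma drun_unit w psi c n : unit_vec psi -> sqnorm (drun A w psi c n) = 1.
Proof.
move=> psi_unit; elim: n => [|n IH] /=; first exact: qa_s0_unit.
by rewrite (sqnorm_unitary _ (qa_U_unitary A _)); case: pselect.
Qed.

Lemma fidelity_le1 w psi c n : unit_vec psi -> fidelity w psi c n <= 1.
Proof. by move=> psi_unit; apply: sqmod_inner_le1 => //; apply: drun_unit. Qed.

Definition fD_values w : set R :=
  [set x | exists psi c, [/\ in_F psi, unit_vec psi, checkpoints c &
                            x = inf [set y | exists i, y = fidelity w psi c (c i)]]].

Lemma fD_sup w : fD A w = sup (fD_values w). Proof. by []. Qed.

Lemma fidelities_has_lbound w psi c :
  has_lbound [set y | exists i, y = fidelity w psi c (c i)].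
Proof. by exists 0 => y [i ->]; apply: sqmod_ge0. Qed.

Lemma fD_values_ub w : ubound (fD_values w) 1.
Proof.
move=> x [psi [c [_ psi_unit _ ->]]].
apply: le_trans (fidelity_le1 w c (c 0%N) psi_unit).
by apply: ge_inf; [apply: fidelities_has_lbound | exists 0%N].
Qed.

Lemma fD_ge w psi c (mu : R) : in_F psi -> unit_vec psi -> checkpoints c ->
  (forall i, mu <= fidelity w psi c (c i)) -> mu <= fD A w.
Proof.
move=> psi_F psi_unit hc fid_ge.
set x := inf [set y | exists i, y = fidelity w psi c (c i)].
have x_in : fD_values w x by exists psi, c.
rewrite fD_sup; apply: (@le_trans _ _ x).
  by apply: lb_le_inf; [exists (fidelity w psi c (c 0%N)), 0%N | move=> y [i ->]].
by apply: sup_upper_bound => //; split; [exists x | exists 1; apply: fD_values_ub].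
Qed.

Lemma fD_le w (mu : R) : 0 <= mu ->
  (forall psi c, in_F psi -> unit_vec psi -> checkpoints c ->
     exists i, fidelity w psi c (c i) <= mu) ->
  fD A w <= mu.
Proof.
move=> mu_ge0 fid_le; rewrite fD_sup.
have mu_ub : ubound (fD_values w) mu.
  move=> x [psi [c [psi_F psi_unit hc ->]]].
  have [i fid_i] := fid_le psi c psi_F psi_unit hc.
  by apply: le_trans fid_i; apply: ge_inf; [apply: fidelities_has_lbound | exists i].
have [[x x_in] | no_value] := pselect (fD_values w !=set0).
  by apply: ge_sup => //; exists x.
by rewrite sup_out // => -[[x x_in] _]; apply: no_value; exists x.
Qed.

Lemma fD_gt_witness w (lam : R) : 0 <= lam -> lam < fD A w ->
  exists psi c, [/\ in_F psi, unit_vec psi, checkpoints c &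
                   forall i, lam < fidelity w psi c (c i)].
Proof.
move=> lam_ge0 lam_lt; apply: contrapT => no_witness.
suff : fD A w <= lam by rewrite leNgt lam_lt.
apply: fD_le => // psi c psi_F psi_unit hc; apply: contrapT => all_gt.
apply: no_witness; exists psi, c; split => // i.
by rewrite ltNge; apply/negP => fid_le; apply: all_gt; exists i.
Qed.

Lemma drun_eq w w' psi c c' n :
  (forall k, (k < n)%N ->
     w k = w' k /\ ((exists i, c i = k) <-> (exists i, c' i = k))) ->
  drun A w psi c n = drun A w' psi c' n.
Proof.
elim: n => // n IH same /=.
have [-> same_ck] := same n (ltnSn n).
rewrite IH; last by move=> k lt_kn; apply: same; apply: ltnW.
by case: pselect => h1; case: pselect => h2 //; exfalso; tauto.
Qed.

Lemma drun_chk w psi c n : (exists i, c i = n) ->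
  drun A w psi c n.+1 = qa_U A (w n) *m psi.
Proof. by move=> n_chk /=; destruct (pselect _). Qed.

Lemma drun_nochk w psi c n : ~ (exists i, c i = n) ->
  drun A w psi c n.+1 = qa_U A (w n) *m drun A w psi c n.
Proof. by move=> n_nochk /=; destruct (pselect _). Qed.

Lemma drun_after_checkpoint w psi c p a t : (exists i, c i = p) ->
  (forall k, (p <= k <= p + t)%N -> w k = a) ->
  (forall k, (p < k <= p + t)%N -> ~ exists i, c i = k) ->
  drun A w psi c (p + t).+1 = iter t.+1 (mulmx (qa_U A a)) psi.
Proof.
move=> p_chk; elim: t => [|t IH] w_a no_chk.
  by rewrite addn0 drun_chk // w_a // addn0 leqnn.
rewrite addnS drun_nochk; last by apply: no_chk; lia.
rewrite w_a; last lia.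
by rewrite IH // => k k_le; [apply: w_a | apply: no_chk]; lia.
Qed.

End DisturbingRun.

Definition prefix_then_const (Sigma : finType) (w : oword Sigma) m a : oword Sigma :=
  fun n => if (n < m)%N then w n else a.

Lemma prefix_then_const_tail (Sigma : finType) (w : oword Sigma) m a n :
  (m <= n)%N -> prefix_then_const w m a n = a.
Proof. by rewrite /prefix_then_const ltnNge => ->. Qed.

Lemma fD_gt_prefix_then_const (R : realType) (Sigma : finType)
    (A : qautomaton R Sigma) w (a : Sigma) (lam : R) :
  0 <= lam < 1 -> lam < fD A w -> exists m, lam < fD A (prefix_then_const w m a).
Proof.
move=> /andP[lam_ge0 lam_lt1] /(fD_gt_witness lam_ge0).
case=> psi [c [psi_F psi_unit hc fid_gt]].
have [N [N_gt0 fid_N]] := unitary_recurrence (qa_U_unitary A a) psi_unit lam_lt1.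
set m := c 0%N; exists m; set w' := prefix_then_const w m a.
pose c' i := (m + i * N)%N.
have hc' : checkpoints c' by move=> i; rewrite /c' mulSn; lia.
have fid_0 : fidelity w' psi c' (c' 0%N) = fidelity w psi c m.
  rewrite /fidelity /c' mul0n addn0; congr (sqmod (inner psi _)).
  apply: drun_eq => k lt_km; split; first by rewrite /w' /prefix_then_const lt_km.
  split=> -[i c_i]; first by move: c_i; rewrite /c'; lia.
  by move: lt_km; rewrite -c_i /m (checkpoints_mono hc).
have fid_S i : fidelity w' psi c' (c' i.+1) =
               sqmod (inner psi (iter N (mulmx (qa_U A a)) psi)).
  have -> : c' i.+1 = (c' i + N.-1).+1 by rewrite /c' mulSn; lia.
  rewrite /fidelity (drun_after_checkpoint psi (a := a)) ?prednK //; first by exists i.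
    move=> k /andP[k_ge _]; rewrite /w' /prefix_then_const ltnNge.
    by rewrite (leq_trans _ k_ge) // /c' leq_addr.
  move=> k k_in [j c_j]; move: k_in; rewrite -c_j /c'.
  case: (leqP j i) => [le_ji | lt_ij].
    by have := leq_mul le_ji (leqnn N); lia.
  by have := leq_mul lt_ij (leqnn N); rewrite mulSn; lia.
apply: (lt_le_trans _ (fD_ge (mu := Num.min (fidelity w psi c m)
          (sqmod (inner psi (iter N (mulmx (qa_U A a)) psi)))) psi_F psi_unit hc' _)).
  by rewrite lt_min fid_N andbT; apply: fid_gt.
by case=> [|i]; rewrite ?fid_0 ?fid_S ge_min lexx ?orbT.
Qed.

Section Flipper.
Variable R : realType.
Local Notation C := R[i].

Definition ket (k : 'I_2) : 'cV[C]_2 := delta_mx k 0.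
Definition flip (q : bool) : 'S_2 := if q then tperm ord0 ord_max else 1%g.
Definition flip_mx (q : bool) : 'M[C]_2 := perm_mx (flip q).

Lemma flipV q : (flip q)^-1%g = flip q.
Proof. by case: q; rewrite /flip ?tpermV ?invg1. Qed.

Lemma adj_perm_mx n (s : 'S_n) : adj (perm_mx s : 'M[C]_n) = perm_mx s^-1.
Proof. by rewrite /adj map_perm_mx tr_perm_mx. Qed.

Lemma flip_mx_unitary q : unitary (flip_mx q).
Proof. by rewrite /unitary /flip_mx adj_perm_mx -!perm_mxM mulgV mulVg perm_mx1. Qed.

Lemma flip_mx_ket q k : flip_mx q *m ket k = ket (flip q k).
Proof.
apply/matrixP => i z; rewrite -colE !mxE (ord1 z) eqxx andbT.
by rewrite -{1}flipV -(inj_eq (@perm_inj _ (flip q))) permKV.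
Qed.

Lemma inner_ket j k : inner (ket j) (ket k) = (j == k)%:R.
Proof.
rewrite /inner /adj /ket map_delta_mx trmx_delta mul_delta_mx_cond.
by case: (j == k); rewrite ?scale1r ?scale0r !mxE ?eqxx.
Qed.

Lemma ket_unit k : unit_vec (ket k).
Proof. by apply: complexI; rewrite -inner_sqnorm inner_ket eqxx. Qed.

Definition flipper (j : 'I_2) : qautomaton R bool :=
  @QAutomaton R bool 2 (ket ord0) flip_mx (delta_mx j j) (ket_unit ord0) flip_mx_unitary.

Lemma in_F_flipper j (psi : 'cV[C]_2) :
  in_F (A := flipper j) psi -> psi = psi j 0 *: ket j.
Proof.
move/submxP=> [D psiD]; apply/matrixP => i z; rewrite (ord1 z) !mxE eqxx andbT.
have [->|ne_ij] := eqVneq i j; first by rewrite mulr1.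
have := congr1 (fun M : 'M[C]_(1, 2) => M 0 i) psiD; rewrite !mxE => ->.
by rewrite mulr0 big1 // => l _; rewrite !mxE (negbTE ne_ij) andbF mulr0.
Qed.

Lemma ket_in_F_flipper j : in_F (A := flipper j) (ket j).
Proof.
rewrite /in_F /= /ket trmx_delta; apply/submxP.
by exists (delta_mx 0 j); rewrite mul_delta_mx.
Qed.

Fixpoint flip_state (w : oword bool) n : 'I_2 :=
  if n is m.+1 then flip (w m) (flip_state w m) else ord0.

Lemma flip_state_const_false w m : (forall n, (m <= n)%N -> w n = false) ->
  forall k, flip_state w (m + k) = flip_state w m.
Proof.
move=> w_false; elim=> [|k IH]; first by rewrite addn0.
by rewrite addnS /= w_false ?leq_addr // IH perm1.
Qed.

Lemma flip_state_const_true w m : (forall n, (m <= n)%N -> w n = true) ->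
  forall k, flip_state w (m + k) =
            if odd k then tperm ord0 ord_max (flip_state w m) else flip_state w m.
Proof.
move=> w_true; elim=> [|k IH]; first by rewrite addn0.
rewrite addnS /= w_true ?leq_addr // IH.
by case: (odd k); rewrite /= ?tpermK.
Qed.

Lemma tperm_ord2_neq (x j : 'I_2) : x != j -> tperm ord0 ord_max x = j.
Proof.
have ord2 (y : 'I_2) : y = ord0 \/ y = ord_max.
  by case: y => [[|[|//]]] y_lt; [left | right]; apply: val_inj.
by case: (ord2 x) => ->; case: (ord2 j) => ->; rewrite ?eqxx ?tpermL ?tpermR.
Qed.

Lemma sqmod_inner_ket j k (al be : C) : sqmod al = 1 -> sqmod be = 1 ->
  sqmod (inner (al *: ket j) (be *: ket k)) = (j == k)%:R.
Proof.
move=> al1 be1; rewrite innerZl innerZr inner_ket !sqmodM sqmod_conj al1 be1 !mul1r.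
by case: (j == k); rewrite ?sqmod1 ?sqmod0.
Qed.

(* Undisturbed, the run of the flipper is a basis vector up to a phase; a
   disturbance at a checkpoint where the run sits on [ket j] only changes
   that phase. *)
Lemma drun_flipper j w (al : C) c n : sqmod al = 1 ->
  (forall i, (c i < n)%N -> flip_state w (c i) = j) ->
  exists be, sqmod be = 1 /\
    drun (flipper j) w (al *: ket j) c n = be *: ket (flip_state w n).
Proof.
move=> al1; elim: n => [|n IH] chk_j; first by exists 1; rewrite sqmod1 scale1r.
have [[i c_i] | no_chk] := pselect (exists i, c i = n).
  exists al; split => //; rewrite drun_chk; last by exists i.
  by rewrite -scalemxAr /= flip_mx_ket -c_i chk_j // c_i.
rewrite drun_nochk //.
have [be [be1 ->]] := IH (fun i lt_cin => chk_j i (ltnW lt_cin)).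
by exists be; rewrite -scalemxAr /= flip_mx_ket.
Qed.

Lemma sqnorm_scale_ket (al : C) k : sqnorm (al *: ket k) = sqmod al.
Proof.
by apply: complexI; rewrite -inner_sqnorm innerZl innerZr inner_ket eqxx mulr1 sqmodE.
Qed.

Lemma fD_flipper_le0 j w m : (forall n, (m <= n)%N -> w n = false) ->
  flip_state w m != j -> fD (flipper j) w <= 0.
Proof.
move=> w_false state_ne; apply: fD_le => // psi c psi_F psi_unit hc.
have [al psiE] : exists al, psi = al *: ket j by exists (psi j 0); apply: in_F_flipper.
subst psi; have al1 : sqmod al = 1 by rewrite -(sqnorm_scale_ket al j); apply: psi_unit.
apply: contrapT => all_pos.
have state_j i : flip_state w (c i) = j.
  elim/ltn_ind: i => i IH.
  have [be [be1 drunE]] : exists be, sqmod be = 1 /\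
      drun (flipper j) w (al *: ket j) c (c i) = be *: ket (flip_state w (c i)).
    by apply: drun_flipper => // k; rewrite (checkpoints_mono hc); apply: IH.
  apply/eqP; apply: contraT => state_i_ne; case: all_pos; exists i.
  by rewrite /fidelity drunE sqmod_inner_ket // eq_sym (negbTE state_i_ne).
have := state_j m.
rewrite -(subnKC (checkpoints_geq hc m)) flip_state_const_false //.
by move/eqP; rewrite (negbTE state_ne).
Qed.

(* Checkpoints are placed at the times the run sits on [ket j]: every other
   step, with the right parity. *)
Lemma fD_flipper_ge1 j w m : (forall n, (m <= n)%N -> w n = true) ->
  1 <= fD (flipper j) w.
Proof.
move=> w_true.
pose c i := (m + ((flip_state w m != j) + i.*2))%N.
have hc : checkpoints c by move=> i; rewrite /c doubleS; lia.
have state_j i : flip_state w (c i) = j.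
  rewrite /c flip_state_const_true // oddD odd_double addbF.
  by case: (eqVneq (flip_state w m) j) => [-> | /tperm_ord2_neq].
have F1 : in_F (A := flipper j) (1 *: ket j) by rewrite scale1r; apply: ket_in_F_flipper.
have unit1 : unit_vec (1 *: ket j) by rewrite scale1r; apply: ket_unit.
apply: (fD_ge F1 unit1 hc) => i; rewrite /fidelity.
have [be [be1 ->]] := drun_flipper (n := c i) (sqmod1 R) (fun k _ => state_j k).
by rewrite sqmod_inner_ket ?sqmod1 // state_j eqxx.
Qed.

Lemma flipper_accepts_const_true j w m (lam : R) : lam < 1 ->
  (forall n, (m <= n)%N -> w n = true) -> langD (flipper j) lam w.
Proof.
by move=> lam_lt1 w_true; apply: lt_le_trans lam_lt1 (fD_flipper_ge1 _ w_true).
Qed.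

Lemma flipper_rejects_const_false j w m (lam : R) : 0 <= lam ->
  (forall n, (m <= n)%N -> w n = false) -> flip_state w m != j ->
  ~ langD (flipper j) lam w.
Proof.
move=> lam_ge0 w_false state_ne; rewrite /langD /= ltNge.
by rewrite (le_trans (fD_flipper_le0 w_false state_ne)).
Qed.

Lemma QBA_D_not_closed_setI (lam : R) : 0 <= lam < 1 ->
  exists (L1 L2 : set (oword bool)),
    [/\ QBA_D bool lam L1, QBA_D bool lam L2 & ~ QBA_D bool lam (L1 `&` L2)].
Proof.
move=> /[dup] lam_itv /andP[lam_ge0 lam_lt1].
exists (langD (flipper ord0) lam), (langD (flipper ord_max) lam).
split=> [||[B defB]]; [by exists (flipper ord0) | by exists (flipper ord_max) |].
have all_true : langD B lam (fun=> true).
  by rewrite -defB; split; apply: (flipper_accepts_const_true _ (m := 0%N) lam_lt1).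
have [m w_in] := fD_gt_prefix_then_const false lam_itv all_true.
set w := prefix_then_const _ m false in w_in.
have [in0 in1] : (langD (flipper ord0) lam `&` langD (flipper ord_max) lam) w.
  by rewrite defB.
have w_false n : (m <= n)%N -> w n = false by apply: prefix_then_const_tail.
have [state0|state_ne0] := eqVneq (flip_state w m) ord0.
  by apply: (flipper_rejects_const_false lam_ge0 w_false _ in1); rewrite state0.
exact: (flipper_rejects_const_false lam_ge0 w_false state_ne0).
Qed.

Lemma QBA_D_not_closed_setC (lam : R) : 0 <= lam < 1 ->
  exists L : set (oword bool), QBA_D bool lam L /\ ~ QBA_D bool lam (~` L).
Proof.
move=> /[dup] lam_itv /andP[lam_ge0 lam_lt1].
exists (langD (flipper ord0) lam); split=> [|[B defB]]; first by exists (flipper ord0).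
pose w0 n := n == 0%N.
have w0_out : (~` langD (flipper ord0) lam) w0.
  by apply: (flipper_rejects_const_false (m := 1) lam_ge0) => [[]|] //=; rewrite tpermL.
rewrite defB in w0_out.
have [m w_in] := fD_gt_prefix_then_const true lam_itv w0_out.
set w := prefix_then_const _ m true in w_in.
have : (~` langD (flipper ord0) lam) w by rewrite defB.
apply; apply: (flipper_accepts_const_true _ (m := m) lam_lt1) => n.
exact: prefix_then_const_tail.
Qed.

End Flipper.

Theorem theorem11 (R : realType) (lam : R) (hlam : 0 <= lam < 1) :
  (exists (Sigma : finType) (L1 L2 : set (oword Sigma)),
      QBA_D Sigma lam L1 /\ QBA_D Sigma lam L2 /\ ~ QBA_D Sigma lam (L1 `&` L2)) /\
  (exists (Sigma : finType) (L : set (oword Sigma)),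
      QBA_D Sigma lam L /\ ~ QBA_D Sigma lam (~` L)).
Proof.
have [L1 [L2 [? ? ?]]] := QBA_D_not_closed_setI hlam.
split; first by exists bool, L1, L2.
by have [L ?] := QBA_D_not_closed_setC hlam; exists bool, L.
Qed.
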